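(* Let $\mathcal{T}$ be any tree of nodes over an $N\times M$ matrix. Then there exists a submatrix $B$ such that every set of nodes of $\mathcal{T}$ whose union equals $B$ contains at least $\frac{NM}{N+M}$ nodes.
   Context: The matrix has coordinate set $\{0,\dots,N-1\}\times\{0,\dots,M-1\}$; a submatrix $[x_0,x_1][y_0,y_1]$ is the set of $(x,y)$ with $x_0\le x\le x_1$, $y_0\le y\le y_1$. Each node covers a subset of the coordinate set. A set of nodes is a tree (of nodes) if it is a rooted tree satisfying: (1) the root covers all coordinates; (2) every node covering more than one element has at least two children, each covering at least one element; (3) every node covering exactly one element has no children; (4) all children of the same node are mutually disjoint; (5) the union of all children of a node $n$ equals $n$. Nodes need not cover submatrices. *)

From mathcomp Require Import all_boot.
Set Implicit Arguments. Unset Strict Implicit. Unset Printing Implicit Defensive.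

Notation coord N M := ('I_N * 'I_M)%type.

Definition submatrix (N M : nat) (x0 x1 y0 y1 : nat) : {set coord N M} :=
  [set p : coord N M | (x0 <= p.1 <= x1) && (y0 <= p.2 <= y1)].

Definition is_submatrix (N M : nat) (B : {set coord N M}) : Prop :=
  exists x0 x1 y0 y1, x0 <= x1 < N /\ y0 <= y1 < M /\ B = submatrix N M x0 x1 y0 y1.

Definition parent_iter (V : Type) (parent : V -> option V) (k : nat) (v : V) :=
  iter k (fun o => obind parent o) (Some v).

Definition rooted_tree (V : finType) (parent : V -> option V) (r : V) : Prop :=
  parent r = None /\ forall v, exists k, parent_iter parent k v = Some r.

Definition children (V : finType) (parent : V -> option V) (n : V) : {set V} :=
  [set c | parent c == Some n].

Definition tree_of_nodes (N M : nat) (V : finType) (parent : V -> option V)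
    (r : V) (cov : V -> {set coord N M}) : Prop :=
  rooted_tree parent r /\
  [/\
      cov r = setT,
      (forall n, 1 < #|cov n| ->
          2 <= #|children parent n| /\
          forall c, c \in children parent n -> 1 <= #|cov c|),
      (forall n, #|cov n| = 1 -> children parent n = set0),
      (forall n c c', c \in children parent n -> c' \in children parent n ->
          c != c' -> [disjoint cov c & cov c'])
    &
      (forall n, children parent n != set0 ->
          \bigcup_(c in children parent n) cov c = cov n)].

From mathcomp Require Import all_boot.
From mathcomp Require Import zify.

Set Implicit Arguments. Unset Strict Implicit. Unset Printing Implicit Defensive.

(* The covers of a tree of nodes form a laminar family.  Cover every row and
   every column of the matrix by nodes.  For a cell (i, j), the node covering
   it in the row cover and the one covering it in the column cover are nested,
   so the smaller one lies in row i ∩ column j and is the singleton node of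
   (i, j).  Hence the N + M covers together contain at least N M distinct
   nodes, so they cannot all have fewer than N M / (N + M) nodes. *)

Lemma leq_card_bigcup (I T : finType) (P : pred I) (F : I -> {set T}) :
  #|\bigcup_(i | P i) F i| <= \sum_(i | P i) #|F i|.
Proof.
elim/big_ind2: _ => [|m A n B leAm leBn|//]; first by rewrite cards0.
exact: leq_trans (leq_card_setU A B).1 (leq_add leAm leBn).
Qed.

Lemma sum_mul_ltn n k c (a : 'I_n -> nat) :
  0 < n -> (forall i, a i * k < c) -> (\sum_i a i) * k < n * c.
Proof.
move=> n_gt0 lt_ac.
have : \sum_i (a i * k).+1 <= \sum_(i < n) c.
  by apply: leq_sum => i _; apply: lt_ac.
under eq_bigr do rewrite -addn1.
rewrite big_split /= !sum_nat_const card_ord muln1 -big_distrl /=; lia.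
Qed.

Lemma leq_card_singleton_nodes (T U : finType) (cov : U -> {set T}) (A : {set U}) :
  (forall x, exists2 v, v \in A & cov v = [set x]) -> #|T| <= #|A|.
Proof.
move=> /fin_all_exists2 [node nodeA covE].
have node_inj : injective node.
  by move=> x y eq_node; apply: set1_inj; rewrite -!covE eq_node.
rewrite -(card_imset predT node_inj) subset_leq_card //.
by apply/subsetP => _ /imsetP [x _ ->].
Qed.

Definition ancestor (V : Type) (parent : V -> option V) (a u : V) :=
  exists k, parent_iter parent k u = Some a.

Lemma ancestor_refl (V : Type) (parent : V -> option V) (u : V) :
  ancestor parent u u.
Proof. by exists 0. Qed.

Lemma ancestor_parent (V : Type) (parent : V -> option V) (a u p : V) :
  parent u = Some p -> ancestor parent a p -> ancestor parent a u.
Proof. by move=> pu [k pk]; exists k.+1; rewrite /parent_iter iterSr /= pu. Qed.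

Lemma iter_obind_None (V : Type) (parent : V -> option V) (k : nat) :
  iter k (fun o => obind parent o) None = None.
Proof. exact: iter_fix. Qed.

Section Lines.

Variables N M : nat.

Definition row_block (i : 'I_N) := submatrix N M i i 0 M.-1.
Definition col_block (j : 'I_M) := submatrix N M 0 N.-1 j j.

Lemma row_blockI_col_block i j : row_block i :&: col_block j = [set (i, j)].
Proof.
apply/setP => -[a b]; rewrite !inE /= xpair_eqE -!val_eqE /=.
have := ltn_ord a; have := ltn_ord b; lia.
Qed.

Lemma mem_row_block i j : (i, j) \in row_block i.
Proof. by rewrite inE /=; have := ltn_ord j; lia. Qed.

Lemma mem_col_block i j : (i, j) \in col_block j.
Proof. by rewrite inE /=; have := ltn_ord i; lia. Qed.

Lemma row_block_submatrix i : 0 < M -> is_submatrix (row_block i).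
Proof.
by move=> M_gt0; exists i, i, 0, M.-1; rewrite leqnn ltn_ord ltn_predL M_gt0.
Qed.

Lemma col_block_submatrix j : 0 < N -> is_submatrix (col_block j).
Proof.
by move=> N_gt0; exists 0, N.-1, j, j; rewrite leqnn ltn_ord ltn_predL N_gt0.
Qed.

End Lines.

Section TreeOfNodes.

Variables (N M : nat) (V : finType) (parent : V -> option V) (r : V).
Variable cov : V -> {set coord N M}.
Hypothesis tree : tree_of_nodes parent r cov.

Lemma cov_ancestor (a u : V) : ancestor parent a u -> cov u \subset cov a.
Proof.
have [_ [_ _ _ _ cov_children]] := tree.
case=> k; elim: k u => [u [->] //|k IHk u].
rewrite /parent_iter iterSr /=.
case pu: (parent u) => [p|]; last by rewrite iter_obind_None.
move=> /IHk; apply: subset_trans.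
have u_child : u \in children parent p by rewrite inE pu.
have children_p : children parent p != set0 by apply/set0Pn; exists u.
by rewrite -(cov_children p children_p) (bigcup_sup _ u_child).
Qed.

Lemma ancestor_or_siblings (u v : V) :
  [\/ ancestor parent u v, ancestor parent v u |
      exists a b p, [/\ parent a = Some p, parent b = Some p, a != b,
                        ancestor parent a u & ancestor parent b v]].
Proof.
have [[_ reach_r] _] := tree.
have [k] := reach_r u; elim: k u => [u ur|k IHk u].
  by case: ur => ->; constructor 1.
rewrite /parent_iter iterSr /=.
case pu: (parent u) => [p|]; last by rewrite iter_obind_None.
case/IHk => [[[|j] pv] | vp | [a [b [q [pa pb neq_ab au bv]]]]].
- case: pv => ->; constructor 2; exact: ancestor_parent pu (ancestor_refl _ _).
- rewrite /parent_iter iterS -/(parent_iter parent j v) in pv.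
  case w_def: (parent_iter parent j v) pv => [w|] //= pv.
  have wv : ancestor parent w v by exists j.
  have [->|neq_uw] := eqVneq u w; first by constructor 1.
  by constructor 3; exists u, w, p; split=> //; apply: ancestor_refl.
- constructor 2; exact: ancestor_parent pu vp.
- by constructor 3; exists a, b, q; split=> //; apply: ancestor_parent pu au.
Qed.

Lemma cov_laminar (u v : V) :
  [\/ cov u \subset cov v, cov v \subset cov u | [disjoint cov u & cov v]].
Proof.
have [_ [_ _ _ disjoint_siblings _]] := tree.
case: (ancestor_or_siblings u v) => [uv|vu|[a [b [p [pa pb neq_ab au bv]]]]].
- by constructor 2; apply: cov_ancestor uv.
- by constructor 1; apply: cov_ancestor vu.
constructor 3; apply: disjointWl (cov_ancestor au) _.
apply: disjointWr (cov_ancestor bv) _.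
by apply: (disjoint_siblings p); rewrite ?inE ?pa ?pb.
Qed.

Lemma nested_cov_singleton (u v : V) (A B : {set coord N M}) (x : coord N M) :
    A :&: B = [set x] -> cov u \subset A -> cov v \subset B ->
    x \in cov u -> x \in cov v ->
  cov u = [set x] \/ cov v = [set x].
Proof.
move=> AB_x uA vB xu xv.
have in_x (X : {set coord N M}) : X \subset A :&: B -> x \in X -> X = [set x].
  by rewrite AB_x subset1 => /orP [/eqP //|/eqP ->]; rewrite inE.
case: (cov_laminar u v) => [uv|vu|dis].
- by left; apply: in_x; rewrite // subsetI uA (subset_trans uv).
- by right; apply: in_x; rewrite // subsetI vB (subset_trans vu).
- by rewrite (disjointFr dis xu) in xv.
Qed.

Lemma cover_node (S : {set V}) (B : {set coord N M}) x :
    \bigcup_(v in S) cov v = B -> x \in B ->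
  exists2 v, v \in S & x \in cov v /\ cov v \subset B.
Proof.
move=> SB xB; have /bigcupP [v vS xv] : x \in \bigcup_(v in S) cov v by rewrite SB.
by exists v; rewrite // -SB (bigcup_sup _ vS).
Qed.

Lemma card_row_col_covers (SR : 'I_N -> {set V}) (SC : 'I_M -> {set V}) :
    (forall i, \bigcup_(v in SR i) cov v = row_block M i) ->
    (forall j, \bigcup_(v in SC j) cov v = col_block N j) ->
  N * M <= \sum_i #|SR i| + \sum_j #|SC j|.
Proof.
move=> SR_row SC_col; set A := (\bigcup_i SR i) :|: (\bigcup_j SC j).
have cell_node (x : coord N M) : exists2 v, v \in A & cov v = [set x].
  case: x => i j.
  have [u uSR [iju uB]] := cover_node (SR_row i) (mem_row_block i j).
  have [v vSC [ijv vB]] := cover_node (SC_col j) (mem_col_block i j).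
  case: (nested_cov_singleton (row_blockI_col_block i j) uB vB iju ijv).
  + by exists u; rewrite // inE; apply/orP; left; apply/bigcupP; exists i.
  + by exists v; rewrite // inE; apply/orP; right; apply/bigcupP; exists j.
have := leq_card_singleton_nodes cell_node.
rewrite card_prod !card_ord => /leq_trans; apply.
apply: leq_trans (leq_card_setU _ _).1 _.
exact: leq_add (leq_card_bigcup _ _) (leq_card_bigcup _ _).
Qed.

Definition cover_bounded (B : {set coord N M}) :=
  [forall S : {set V}, (\bigcup_(v in S) cov v == B) ==> (N * M <= #|S| * (N + M))].

Lemma cover_boundedP B : cover_bounded B ->
  forall S : {set V}, \bigcup_(v in S) cov v = B -> N * M <= #|S| * (N + M).
Proof. by move=> /forallP boundB S SB; move: (boundB S); rewrite SB eqxx. Qed.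

Lemma cover_unbounded B :
  ~~ cover_bounded B ->
  exists S : {set V}, \bigcup_(v in S) cov v = B /\ #|S| * (N + M) < N * M.
Proof.
move=> /forallPn [S]; rewrite negb_imply -ltnNge => /andP [/eqP SB small].
by exists S.
Qed.

Lemma exists_cover_bounded_line :
  0 < N -> 0 < M ->
  [exists i, cover_bounded (row_block M i)] ||
  [exists j, cover_bounded (col_block N j)].
Proof.
move=> N_gt0 M_gt0; apply/negPn/negP.
rewrite negb_or => /andP [/existsPn rows /existsPn cols].
have /fin_all_exists [SR SR_row] := fun i => cover_unbounded (rows i).
have /fin_all_exists [SC SC_col] := fun j => cover_unbounded (cols j).
have := card_row_col_covers (fun i => (SR_row i).1) (fun j => (SC_col j).1).
have := sum_mul_ltn N_gt0 (fun i => (SR_row i).2).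
have := sum_mul_ltn M_gt0 (fun j => (SC_col j).2).
nia.
Qed.

End TreeOfNodes.

Theorem theorem3 (N M : nat) (hN : 0 < N) (hM : 0 < M)
    (V : finType) (parent : V -> option V) (r : V) (cov : V -> {set 'I_N * 'I_M})
    (hT : tree_of_nodes parent r cov) :
  exists B : {set 'I_N * 'I_M}, is_submatrix B /\
    forall S : {set V}, \bigcup_(v in S) cov v = B -> N * M <= #|S| * (N + M).
Proof.
case/orP: (exists_cover_bounded_line hT hN hM) => [/existsP [i] | /existsP [j]] bounded.
- exists (row_block M i); split; first exact: row_block_submatrix.
  exact: cover_boundedP.
- exists (col_block N j); split; first exact: col_block_submatrix.
  exact: cover_boundedP.
Qed.
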